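(* Let $\mathbb{G}$ be the bouquet described as follows: on the boundary circle of its vertex choose $14$ points $p_0,p_1,\dots,p_{13}$ in cyclic order; $\mathbb{G}$ has three non-orientable loops with ends at $\{p_1,p_6\}$, $\{p_2,p_9\}$, $\{p_5,p_{12}\}$ and four orientable loops with ends at $\{p_0,p_3\}$, $\{p_4,p_7\}$, $\{p_8,p_{11}\}$, $\{p_{10},p_{13}\}$. Then $\mathbb{G}$ is not pseudo-orientable, and its quasi-tree generating polynomial $p_{\mathbb{G}}=\sum_Q\prod_{e\in Q}x_e$ (sum over quasi-trees $Q$) is Hurwitz stable.
   Context: A bouquet is a ribbon graph with a single vertex disc $v$ and loops attached along pairs of disjoint segments (ends) of the boundary of $v$. A loop $e$ is orientable if $v\cup e$ is an annulus and non-orientable if it is a Möbius band. A quasi-tree is a set $Q$ of loops such that $v$ together with the loops in $Q$ has exactly one boundary component. A bouquet is pseudo-orientable if its vertex boundary circle is the union of two closed arcs $S_1,S_2$ meeting in exactly two points such that both ends of each orientable loop lie in the interior of one $S_i$ and each non-orientable loop has one end in the interior of each of $S_1,S_2$. A polynomial $f\in\mathbb{C}[z_1,\dots,z_n]$ is Hurwitz stable if $f\ne0$ whenever $\mathrm{Re}(z_i)>0$ for all $i$. *)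

From mathcomp Require Import all_boot all_algebra.
From mathcomp Require Import Rstruct.
From mathcomp Require Import complex.
From mathcomp Require Import mpoly.
Set Implicit Arguments. Unset Strict Implicit. Unset Printing Implicit Defensive.
Import GRing.Theory Num.Theory.
Local Open Scope ring_scope.

Definition C : numClosedFieldType := complex Rdefinitions.R.

(* Bouquets as signed chord diagrams.                                      *)
(* The boundary circle of the vertex carries N marked points p_0..p_{N-1}   *)
(* in cyclic order (type 'I_N, successor = ordS).  There are m loops       *)
(* (type 'I_m); loop e has its two ends at the points end1 e, end2 e and   *)
(* ori e = true iff e is orientable (v u e an annulus), false iff it is    *)
(* non-orientable (v u e a Moebius band).                                  *)
Record bouquet := Bouquet {
  npts  : nat;
  nloops : nat;
  end1 : 'I_nloops -> 'I_npts;
  end2 : 'I_nloops -> 'I_npts;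
  ori  : 'I_nloops -> bool }.

(* Boundary of the ribbon subgraph v u Q.  Each marked point x has two     *)
(* "corners" (x,false) (just before x) and (x,true) (just after x).  The   *)
(* boundary of v u Q is the union of:                                      *)
(*  - the vertex arcs from (x,true) to (ordS x,false);                     *)
(*  - for x not an end of a loop of Q, the passage (x,false)--(x,true);    *)
(*  - for a loop e in Q with ends y,y': its two boundary sides, joining    *)
(*    (y,false)--(y',true), (y,true)--(y',false) if e is orientable and    *)
(*    (y,false)--(y',false), (y,true)--(y',true) if e is non-orientable.   *)
(* Every corner has degree 2, so the boundary components of v u Q are the  *)
(* connected components of this graph.                                     *)
Section Boundary.
Variable G : bouquet.
Local Notation N := (npts G).
Local Notation m := (nloops G).

Definition corner := ('I_N * bool)%type.

Definition is_end_in (Q : {set 'I_m}) (x : 'I_N) : bool :=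
  [exists e in Q, (@end1 G e == x) || (@end2 G e == x)].

Definition ribbon_side (e : 'I_m) (c d : corner) : bool :=
  [exists b : bool,
     (c == (@end1 G e, b)) && (d == (@end2 G e, if @ori G e then ~~ b else b))].

Definition bdry_adj0 (Q : {set 'I_m}) (c d : corner) : bool :=
  [|| (c.2 && ~~ d.2 && (d.1 == ordS c.1)),
      (~~ is_end_in Q c.1 && (d.1 == c.1) && ~~ c.2 && d.2)
    | [exists e in Q, ribbon_side e c d]].

Definition bdry_adj (Q : {set 'I_m}) : rel corner :=
  fun c d => bdry_adj0 Q c d || bdry_adj0 Q d c.

Definition nbdry (Q : {set 'I_m}) : nat := n_comp (bdry_adj Q) predT.

Definition quasi_tree (Q : {set 'I_m}) : bool := nbdry Q == 1%N.

(* Pseudo-orientability.  The two points where S1 and S2 meet cannot be   *)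
(* ends (every end must be interior to S1 or S2), so each lies in a gap    *)
(* between consecutive marked points; we encode the gap just before p_a by *)
(* a : 'I_N.  With cuts before p_a and before p_b, S1 contains the points *)
(* p_a, p_{a+1}, ..., p_{b-1} (cyclically), S2 the others.                 *)
Definition in_S1 (a b x : 'I_N) : bool :=
  if (a <= b)%N then ((a <= x) && (x < b))%N else ((a <= x) || (x < b))%N.

Definition pseudo_orientable : Prop :=
  exists a b : 'I_N, forall e : 'I_m,
    if @ori G e then in_S1 a b (@end1 G e) == in_S1 a b (@end2 G e)
    else in_S1 a b (@end1 G e) != in_S1 a b (@end2 G e).

Definition qt_poly : {mpoly C[m]} :=
  \sum_(Q : {set 'I_m} | quasi_tree Q) \prod_(e in Q) 'X_e.

End Boundary.

Definition hurwitz_stable (n : nat) (f : {mpoly C[n]}) : Prop :=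
  forall z : 'I_n -> C, (forall i, 0 < 'Re (z i)) -> f.@[z] != 0.

Definition G59_end1 (e : 'I_7) : 'I_14 := inord (nth 0%N [:: 1; 2; 5; 0; 4; 8; 10]%N e).
Definition G59_end2 (e : 'I_7) : 'I_14 := inord (nth 0%N [:: 6; 9; 12; 3; 7; 11; 13]%N e).
Definition G59_ori (e : 'I_7) : bool := (3 <= e)%N.

Definition G59 : bouquet := @Bouquet 14 7 G59_end1 G59_end2 G59_ori.

From mathcomp Require Import all_boot all_algebra.
From mathcomp Require Import perm order ring mpoly.
Set Implicit Arguments. Unset Strict Implicit. Unset Printing Implicit Defensive.
Import Order.TTheory GRing.Theory Num.Theory.
Local Open Scope ring_scope.

(* For an explicit integer 7x7 matrix M, the principal minor det M[Q] is 1
   when Q is a quasi-tree and 0 otherwise, so expanding the determinant gives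
   p_G(z) = det (1 + diag(z) M).  Moreover M + M^T = 2 a a^T, where a is the
   indicator of the non-orientable loops, hence Re (u^* M u) >= 0 for every
   complex vector u.  A nonzero left kernel vector v of 1 + diag(z) M yields
   w := v diag(z) with w M = -v, so Re (sum_ij w_i M_ij conj(w_j)) equals
   - sum_i Re(z_i) |v_i|^2, which is negative when all Re z_i > 0.  The
   minor identities and the failure of pseudo-orientability are finite
   checks, done by evaluation. *)

Definition principal_mx (R : pzSemiRingType) n (J : {set 'I_n}) (M : 'M[R]_n) : 'M[R]_n :=
  \matrix_(i, j) if i \in J then M i j else (i == j)%:R.

Lemma map_principal_mx (R S : nzRingType) (f : {rmorphism R -> S}) n J (M : 'M[R]_n) :
  map_mx f (principal_mx J M) = principal_mx J (map_mx f M).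
Proof. by apply/matrixP => i j; rewrite !mxE; case: (i \in J); rewrite ?rmorph_nat. Qed.

Lemma det_1_add_diag_mul (R : comNzRingType) n (z : 'I_n -> R) (M : 'M[R]_n) :
  \det (1%:M + diag_mx (\row_i z i) *m M) =
  \sum_(J : {set 'I_n}) (\prod_(i in J) z i) * \det (principal_mx J M).
Proof.
rewrite [LHS]/determinant.
transitivity (\sum_(s : 'S_n) \sum_(J : {set 'I_n}) (-1) ^+ s *
   ((\prod_(i in J) z i) * \prod_i (principal_mx J M) i (s i))).
  apply: eq_bigr => s _; rewrite -mulr_sumr; congr (_ * _).
  rewrite (eq_bigr (fun i => z i * M i (s i) + (i == s i)%:R)); last first.
    by move=> i _; rewrite mul_diag_mx !mxE addrC.
  rewrite bigA_distr; apply: eq_bigr => J _.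
  rewrite [\prod_(i in J) _]big_mkcond -big_split /=; apply: eq_bigr => i _.
  by rewrite mxE; case: (i \in J); rewrite ?mul1r.
rewrite exchange_big; apply: eq_bigr => J _.
by rewrite /determinant mulr_sumr; apply: eq_bigr => s _; rewrite mulrCA.
Qed.

Section Accretive.
Variable K : numClosedFieldType.

Definition accretive n (M : 'M[K]_n) : Prop :=
  forall u : 'I_n -> K, 0 <= 'Re (\sum_i \sum_j (u i)^* * M i j * u j).

Lemma rank1_hermitian_part_accretive n (M : 'M[K]_n) (a : 'I_n -> K) :
  (forall i j, M i j + (M j i)^* = a i * (a j)^*) -> accretive M.
Proof.
move=> herm u; set q := \sum_i _.
pose s := \sum_i (u i)^* * a i.
have q_add_conj : q + q^* = s * s^*.
  rewrite /q rmorph_sum /=; under [X in _ + X]eq_bigr do rewrite rmorph_sum /=.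
  rewrite [X in _ + X]exchange_big -big_split /= /s rmorph_sum mulr_suml /=.
  apply: eq_bigr => i _; rewrite -big_split mulr_sumr /=; apply: eq_bigr => j _.
  rewrite !rmorphM /= !conjCK.
  transitivity ((u i)^* * (M i j + (M j i)^*) * u j); first by ring.
  by rewrite herm; ring.
by rewrite (ReE q) q_add_conj divr_ge0 ?mul_conjC_ge0 ?ler0n.
Qed.

Lemma accretive_det_1_add_diag_neq0 n (M : 'M[K]_n) (z : 'I_n -> K) :
  accretive M -> (forall i, 0 < 'Re (z i)) ->
  \det (1%:M + diag_mx (\row_i z i) *m M) != 0.
Proof.
move=> accM Rez_gt0; apply/negP => /det0P [v /rV0Pn [k vk_neq0] vA0].
pose w := \row_i (v 0 i * z i).
have wM : w *m M = - v.
  rewrite (_ : w = v *m diag_mx (\row_i z i)); last by apply/rowP => i; rewrite mul_mx_diag !mxE.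
  by apply/eqP; rewrite -addr_eq0 addrC -{1}[v]mulmx1 -mulmxA -mulmxDr vA0.
pose S := \sum_j 'Re (z j) * `|v 0 j| ^+ 2.
have term_ge0 j : 0 <= 'Re (z j) * `|v 0 j| ^+ 2.
  by rewrite mulr_ge0 ?exprn_ge0 ?normr_ge0 // ltW ?Rez_gt0.
have S_ge0 : 0 <= S by apply: sumr_ge0 => j _.
have : 0 <= - S.
  have <- : 'Re (\sum_i \sum_j ((w 0 i)^*)^* * M i j * (w 0 j)^*) = - S; last exact: accM.
  rewrite exchange_big raddf_sum /S -sumrN /=.
  apply: eq_bigr => j _; rewrite -mulr_suml.
  under eq_bigr do rewrite conjCK.
  move/matrixP: wM => /(_ 0 j); rewrite !mxE => ->.
  rewrite rmorphM /= mulNr mulrA -normCK raddfN /= ReMl ?Re_conj; first by rewrite mulrC.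
  by rewrite ger0_real ?exprn_ge0 ?normr_ge0.
rewrite oppr_ge0 => S_le0.
have S0 : S = 0 by apply/le_anti; rewrite S_le0 S_ge0.
move/eqP: (psumr_eq0P (fun j _ => term_ge0 j) S0 (i := k) isT).
by rewrite mulf_eq0 gt_eqF ?Rez_gt0 //= expf_eq0 normr_eq0 (negbTE vk_neq0).
Qed.
End Accretive.

Fixpoint laplace_det (R : pzRingType) n (A : nat -> nat -> R) : R :=
  if n is n'.+1 then
    foldr (fun j acc => (-1) ^+ j * A 0%N j * laplace_det n' (fun i k => A i.+1 (bump j k)) + acc)
      0 (iota 0 n)
  else 1.

Lemma laplace_detS (R : pzRingType) n (A : nat -> nat -> R) : laplace_det n.+1 A =
  \sum_(0 <= j < n.+1) (-1) ^+ j * A 0%N j * laplace_det n (fun i k => A i.+1 (bump j k)).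
Proof. by rewrite unlock. Qed.

Lemma det_laplace (R : comNzRingType) n (A : 'M[R]_n) (F : nat -> nat -> R) :
  (forall i j : 'I_n, A i j = F i j) -> \det A = laplace_det n F.
Proof.
elim: n A F => [|n IH] A F AF; first by rewrite det_mx00.
rewrite (expand_det_row A ord0) laplace_detS big_mkord; apply: eq_bigr => j _.
rewrite /cofactor AF (IH _ (fun i k => F i.+1 (bump j k))) ?add0n; first by rewrite mulrCA mulrA.
by move=> i k; rewrite !mxE AF lift0.
Qed.

Lemma eq_dfs (T : finType) (g g' : T -> seq T) :
  g =1 g' -> forall n v x, dfs g n v x = dfs g' n v x.
Proof.
move=> eq_g; elim=> [|n IH] v x //=; rewrite eq_g.
by case: (x \in v) => //; elim: (g' x) (x :: v) => //= y a IHa w; rewrite IH IHa.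
Qed.

(* Adjacency lists are tabulated so that evaluation computes [e] only once
   per pair. *)
Definition n_comp_seq (T : finType) (s : seq T) (e : rel T) : nat :=
  let adj := [seq [seq z <- s | e y z] | y <- s] in
  let g y := nth [::] adj (index y s) in
  count (fun x => let D := dfs g (size s) [::] x in odflt x (ohead [seq y <- s | y \in D]) == x) s.

Lemma n_comp_enum (T : finType) (e : rel T) : n_comp e predT = n_comp_seq (enum T) e.
Proof.
rewrite /n_comp_seq enumT /n_comp_mem cardE /enum_mem size_filter; apply: eq_count => x.
rewrite !inE andbT /roots /fingraph.root /pick /connect /rgraph /enum_mem cardT enumT /=.
rewrite (@eq_dfs _ _ (fun y => [seq z <- Finite.enum T | e y z])) // => y.
by rewrite (nth_map y) ?nth_index ?index_mem -?enumT ?mem_enum.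
Qed.

(* [insub_eq] is used instead of [insub] because it reduces under
   [vm_compute]; so do [ord_seq] and [inord_nth] below. *)
Definition ord_seq n : seq 'I_n := pmap (@insub_eq _ _ 'I_n) (iota 0 n).

Lemma ord_seqE n : ord_seq n = ord_enum n.
Proof. exact: eq_pmap (@insub_eqE _ _ 'I_n) _. Qed.

Lemma mem_ord_seq n (i : 'I_n) : i \in ord_seq n.
Proof. by rewrite ord_seqE mem_ord_enum. Qed.

Lemma subseq_enum_ord_seq n (J : {set 'I_n}) : subseq (enum J) (ord_seq n).
Proof.
have -> : ord_seq n = Finite.enum 'I_n by rewrite ord_seqE unlock.
exact: filter_subseq.
Qed.

Lemma exists_in_has (T : finType) (A : {set T}) (P : pred T) :
  [exists x in A, P x] = has P (enum A).
Proof.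
apply/existsP/hasP => [[x /andP[xA Px]]|[x]]; first by exists x; rewrite ?mem_enum.
by rewrite mem_enum => xA Px; exists x; rewrite xA.
Qed.

Fixpoint sublists (T : Type) (s : seq T) : seq (seq T) :=
  if s is x :: s' then [seq x :: t | t <- sublists s'] ++ sublists s' else [:: [::]].

Lemma mem_sublists (T : eqType) (s1 s2 : seq T) : subseq s1 s2 -> s1 \in sublists s2.
Proof.
elim: s2 s1 => [|x s2 IH] [|y s1] //=; rewrite mem_cat.
  by move=> _; rewrite IH ?sub0seq ?orbT.
by case: eqP => [-> /IH s1_in|_ /IH ->]; rewrite ?orbT ?(map_f (cons x)).
Qed.

Section ComputableBoundary.
Variable G : bouquet.
Local Notation N := (npts G).
Local Notation m := (nloops G).
Variables e1 e2 : 'I_m -> 'I_N.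
Hypotheses (end1E : @end1 G =1 e1) (end2E : @end2 G =1 e2).

Definition corner_seq : seq (corner G) :=
  [seq (x, b) | x <- ord_seq N, b <- [:: true; false]].

Lemma enum_corner : enum {: corner G} = corner_seq.
Proof.
rewrite enumT unlock /= /prod_enum /corner_seq ord_seqE.
have -> : enum 'I_N = ord_enum N by rewrite enumT unlock.
by rewrite enumT unlock.
Qed.

Lemma ribbon_sideE e (c d : corner G) : ribbon_side e c d =
  (c.1 == e1 e) && (d == (e2 e, if ori e then ~~ c.2 else c.2)).
Proof.
rewrite /ribbon_side end1E end2E.
case: c => x b; apply/existsP/andP => /= [[b' /andP[/eqP[-> ->] /eqP ->]]|[/eqP -> /eqP ->]] //.
by exists b; rewrite !eqxx.
Qed.

Definition bdry_adj0_seq (r : seq 'I_m) (c d : corner G) : bool :=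
  [|| c.2 && ~~ d.2 && (d.1 == ordS c.1),
      ~~ has (fun e => (e1 e == c.1) || (e2 e == c.1)) r && (d.1 == c.1) && ~~ c.2 && d.2
    | has (fun e => (c.1 == e1 e) && (d == (e2 e, if ori e then ~~ c.2 else c.2))) r].

Definition bdry_adj_seq (r : seq 'I_m) : rel (corner G) :=
  fun c d => bdry_adj0_seq r c d || bdry_adj0_seq r d c.

Lemma bdry_adj0_enum (Q : {set 'I_m}) : bdry_adj0 Q =2 bdry_adj0_seq (enum Q).
Proof.
move=> c d; rewrite /bdry_adj0 /bdry_adj0_seq /is_end_in !exists_in_has.
congr [|| _, _ | _]; first by congr (~~ _ && _ && _ && _); apply: eq_has => e; rewrite end1E end2E.
by apply: eq_has => e; rewrite ribbon_sideE.
Qed.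

Lemma nbdry_enum (Q : {set 'I_m}) : nbdry Q = n_comp_seq corner_seq (bdry_adj_seq (enum Q)).
Proof.
rewrite /nbdry (@eq_n_comp _ _ (bdry_adj_seq (enum Q))) ?n_comp_enum ?enum_corner //.
by apply: eq_connect => c d; rewrite /bdry_adj /bdry_adj_seq !bdry_adj0_enum.
Qed.

Definition pseudo_orientableb : bool :=
  has (fun a => has (fun b => all (fun e =>
    if ori e then in_S1 a b (e1 e) == in_S1 a b (e2 e)
    else in_S1 a b (e1 e) != in_S1 a b (e2 e)) (ord_seq m)) (ord_seq N)) (ord_seq N).

Lemma pseudo_orientableP : reflect (pseudo_orientable G) pseudo_orientableb.
Proof.
apply: (iffP hasP) => [[a _ /hasP[b _ /allP cut]]|[a [b cut]]].
  by exists a, b => e; rewrite end1E end2E; apply: cut; rewrite mem_ord_seq.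
exists a; rewrite ?mem_ord_seq //; apply/hasP; exists b; rewrite ?mem_ord_seq //.
by apply/allP => e _; rewrite -end1E -end2E.
Qed.
End ComputableBoundary.

Definition inord_nth n (s : seq nat) (i : nat) : 'I_n.+1 :=
  odflt ord0 (@insub_eq _ _ 'I_n.+1 (nth 0%N s i)).

Lemma inord_nthE n s i : inord_nth n s i = inord (nth 0%N s i).
Proof. by rewrite /inord_nth insub_eqE. Qed.

Definition G59_e1 (e : 'I_7) : 'I_14 := inord_nth 13 [:: 1; 2; 5; 0; 4; 8; 10]%N e.
Definition G59_e2 (e : 'I_7) : 'I_14 := inord_nth 13 [:: 6; 9; 12; 3; 7; 11; 13]%N e.

Lemma G59_end1E : @end1 G59 =1 G59_e1. Proof. by move=> e; rewrite /G59_e1 inord_nthE. Qed.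
Lemma G59_end2E : @end2 G59 =1 G59_e2. Proof. by move=> e; rewrite /G59_e2 inord_nthE. Qed.

Definition M59_rows : seq (seq int) :=
  [:: [:: 1; 1; 1; 1; 1; 0; 0]; [:: 1; 1; 1; 1; 0; 1; 0]; [:: 1; 1; 1; 0; 1; 0; 1];
      [:: -1; -1; 0; 0; 0; 0; 0]; [:: -1; 0; -1; 0; 0; 0; 0]; [:: 0; -1; 0; 0; 0; 0; 1];
      [:: 0; 0; -1; 0; 0; -1; 0]].

Definition M59_entry (i j : nat) : int := nth 0 (nth [::] M59_rows i) j.

Definition M59_principal_entry (r : seq 'I_7) (i j : nat) : int :=
  if i \in map val r then M59_entry i j else (i == j)%:R.

Lemma M59_principal_minors_qt : all (fun r =>
    laplace_det 7 (M59_principal_entry r) ==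
    (n_comp_seq (corner_seq G59) (@bdry_adj_seq G59 G59_e1 G59_e2 r) == 1%N)%:R)
  (sublists (ord_seq 7)).
Proof. by vm_compute. Qed.

Lemma G59_not_pseudo_orientable : ~ pseudo_orientable G59.
Proof. by move/(pseudo_orientableP G59_end1E G59_end2E); apply/negP; vm_compute. Qed.

Definition M59 : 'M[int]_7 := \matrix_(i, j) M59_entry i j.

Lemma M59_symmetric_part : all (fun i => all (fun j =>
  M59_entry i j + M59_entry j i == ((i < 3) && (j < 3))%N%:R *+ 2) (iota 0 7)) (iota 0 7).
Proof. by []. Qed.

Lemma M59_accretive : accretive (map_mx intr M59 : 'M[C]_7).
Proof.
pose a i : C := if (i < 3)%N then sqrtC 2 else 0.
apply: (@rank1_hermitian_part_accretive _ _ _ a) => i j.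
have /allP/(_ i) := M59_symmetric_part; rewrite mem_iota ltn_ord => /(_ isT).
move=> /allP/(_ j); rewrite mem_iota ltn_ord => /(_ isT) /eqP sym.
rewrite !mxE rmorph_int -intrD sym /a.
case: (i < 3)%N; case: (j < 3)%N; rewrite ?rmorph0 ?mulr0 ?mul0r //=.
by rewrite geC0_conj ?sqrtC_ge0 // -expr2 sqrtCK.
Qed.

Lemma det_principal_M59 (J : {set 'I_7}) :
  \det (principal_mx J (map_mx intr M59 : 'M[C]_7)) = (@quasi_tree G59 J)%:R.
Proof.
rewrite -map_principal_mx det_map_mx.
rewrite (@det_laplace _ _ _ (M59_principal_entry (enum J))); last first.
  by move=> i j; rewrite !mxE /M59_principal_entry (mem_map val_inj) mem_enum.
have /allP/(_ _ (mem_sublists (subseq_enum_ord_seq J)))/eqP -> :=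
  M59_principal_minors_qt.
by rewrite /quasi_tree (nbdry_enum G59_end1E G59_end2E) rmorph_nat.
Qed.

Lemma meval_qt_poly (G : bouquet) (z : 'I_(nloops G) -> C) :
  (qt_poly G).@[z] = \sum_(Q | quasi_tree Q) \prod_(e in Q) z e.
Proof.
rewrite /qt_poly rmorph_sum /=; apply: eq_bigr => Q _.
by rewrite rmorph_prod /=; apply: eq_bigr => e _; rewrite mevalXU.
Qed.

Lemma qt_poly_G59_det (z : 'I_7 -> C) :
  (qt_poly G59).@[z] = \det (1%:M + diag_mx (\row_i z i) *m map_mx intr M59).
Proof.
rewrite det_1_add_diag_mul (@meval_qt_poly G59) big_mkcond; apply: eq_bigr => Q _.
by rewrite det_principal_M59; case: (quasi_tree Q); rewrite ?mulr1 ?mulr0.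
Qed.

Theorem proposition5p9 :
  ~ pseudo_orientable G59 /\ hurwitz_stable (qt_poly G59).
Proof.
split; first exact: G59_not_pseudo_orientable.
move=> z Rez_gt0; rewrite qt_poly_G59_det.
exact: accretive_det_1_add_diag_neq0 M59_accretive Rez_gt0.
Qed.
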